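(* Let $G$ be an arbitrary graph and let $H$ be an odd cycle. Then $AT(G+_S H)=3$.
   Context: For an orientation $D$, a subdigraph is Eulerian if every vertex has equal in- and outdegree in it; $D$ is an AT-orientation if the numbers of Eulerian subgraphs with an even and with an odd number of arcs differ; $AT(G)$ is the smallest $k$ such that $G$ has an AT-orientation of maximum outdegree at most $k-1$. $S(G)$ is obtained from $G$ by subdividing each edge once, with vertex set identified with $V(G)\cup E(G)$. $G+_S H$ has vertex set $(V(G)\cup E(G))\times V(H)$, with $(u_1,u_2)\sim(v_1,v_2)$ iff [$u_1=v_1\in V(G)$ and $u_2v_2\in E(H)$] or [$u_2=v_2$ and $u_1v_1\in E(S(G))$]. *)

From mathcomp Require Import all_boot.
Set Implicit Arguments. Unset Strict Implicit. Unset Printing Implicit Defensive.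

(* A finite simple graph is a finType W with a symmetric irreflexive rel W. *)

Section AT.
Variables (W : finType) (adj : rel W).

Definition is_orientation (D : {set W * W}) : bool :=
  [forall x, forall y, ((x, y) \in D) ==> adj x y] &&
  [forall x, forall y, adj x y ==> (((x, y) \in D) != ((y, x) \in D))].

Definition outdeg (A : {set W * W}) (v : W) : nat := #|[set a in A | a.1 == v]|.
Definition indeg (A : {set W * W}) (v : W) : nat := #|[set a in A | a.2 == v]|.

Definition eulerian (D A : {set W * W}) : bool :=
  (A \subset D) && [forall v, indeg A v == outdeg A v].

Definition even_eulerian (D : {set W * W}) : nat :=
  #|[set A : {set W * W} | eulerian D A && ~~ odd #|A|]|.
Definition odd_eulerian (D : {set W * W}) : nat :=
  #|[set A : {set W * W} | eulerian D A && odd #|A|]|.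

Definition AT_orientation (D : {set W * W}) : bool :=
  is_orientation D && (even_eulerian D != odd_eulerian D).

Definition has_AT_orientation (k : nat) : Prop :=
  exists D : {set W * W}, AT_orientation D && [forall v, outdeg D v < k].

Definition AT_eq (k : nat) : Prop :=
  has_AT_orientation k /\ forall j, j < k -> ~ has_AT_orientation j.
End AT.

Section Subdiv.
Variables (V : finType) (g : rel V).

Definition is_edge (e : {set V}) : bool :=
  [exists u, exists v, g u v && (e == [set u; v])].

Definition edges : finType := {e : {set V} | is_edge e}.

Definition subdiv_adj (x y : V + edges) : bool :=
  match x, y with
  | inl v, inr e => v \in val e
  | inr e, inl v => v \in val e
  | _, _ => false
  end.
End Subdiv.

Definition cycle_adj (n : nat) (i j : 'I_n) : bool :=
  ((j : nat) == i.+1 %% n) || ((i : nat) == j.+1 %% n).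

Definition sprod_adj (V : finType) (g : rel V) (n : nat)
  (x y : (V + edges g) * 'I_n) : bool :=
  [&& (if x.1 is inl _ then true else false), x.1 == y.1 & cycle_adj x.2 y.2]
  || ((x.2 == y.2) && subdiv_adj x.1 y.1).

From mathcomp Require Import all_boot zify.
Set Implicit Arguments. Unset Strict Implicit. Unset Printing Implicit Defensive.

(* Upper bound: give every vertex of G +_S C_n a height (0 for edge vertices,
   i + 1 for (v, i)) and orient each edge upwards.  The orientation is acyclic,
   so its only Eulerian subgraph is empty and it is an AT-orientation; every
   vertex has at most two higher neighbours.
   Lower bound: in an orientation of maximum outdegree at most 1 the copy of the
   odd cycle over a vertex v0 must be a directed cycle C, and every Eulerian
   subgraph either contains C or avoids it.  Symmetric difference with C is then
   a parity-reversing involution on Eulerian subgraphs. *)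

Section Eulerian.
Variable W : finType.
Implicit Types (A B C D : {set W * W}) (v : W).

Definition balanced A : Prop := forall v, indeg A v = outdeg A v.

Lemma card_sep_setU A B (P : pred (W * W)) : [disjoint A & B] ->
  #|[set a in A :|: B | P a]| = #|[set a in A | P a]| + #|[set a in B | P a]|.
Proof.
move=> dAB; apply/eqP; rewrite !setIdE setIUl (leq_card_setU _ _).
exact: disjointW (subsetIl _ _) (subsetIl _ _) dAB.
Qed.

Lemma indeg_setU A B v : [disjoint A & B] ->
  indeg (A :|: B) v = indeg A v + indeg B v.
Proof. exact: card_sep_setU. Qed.

Lemma outdeg_setU A B v : [disjoint A & B] ->
  outdeg (A :|: B) v = outdeg A v + outdeg B v.
Proof. exact: card_sep_setU. Qed.

Lemma balanced_setU A B : [disjoint A & B] -> balanced A -> balanced B ->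
  balanced (A :|: B).
Proof. by move=> dAB bA bB v; rewrite indeg_setU // outdeg_setU // bA bB. Qed.

Lemma balanced_setD A C : C \subset A -> balanced A -> balanced C ->
  balanced (A :\: C).
Proof.
move=> sCA bA bC v; have dAC : [disjoint A :\: C & C].
  by rewrite -setI_eq0 setIDAC setDIl setDv setI0.
have AE : (A :\: C) :|: C = A.
  by rewrite setUC setDE setUIr setUCr setIT; apply/setUidPr.
apply/(@addIn (indeg C v)); rewrite {2}bC -indeg_setU // -outdeg_setU // AE.
exact: bA.
Qed.

Lemma eulerianP D A : reflect (A \subset D /\ balanced A) (eulerian D A).
Proof.
apply: (iffP andP) => -[sAD bA]; split=> //; first by move=> v; apply/eqP/(forallP bA).
by apply/forallP => v; rewrite bA.
Qed.

Lemma card_setU_disjoint A B : [disjoint A & B] -> #|A :|: B| = #|A| + #|B|.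
Proof. by move=> dAB; apply/eqP; rewrite (leq_card_setU A B). Qed.

Lemma even_eq_odd_eulerian D C : C \subset D -> odd #|C| -> balanced C ->
  (forall A, eulerian D A -> (C \subset A) || [disjoint C & A]) ->
  even_eulerian D = odd_eulerian D.
Proof.
move=> sCD oC bC splitC.
pose f A := (A :\: C) :|: (C :\: A).
have fK : involutive f.
  by move=> A; apply/setP => a; rewrite !inE; case: (a \in A); case: (a \in C).
have f_eulerian A : eulerian D A -> eulerian D (f A) && (odd #|f A| == ~~ odd #|A|).
  move=> EA; case/eulerianP: (EA) => sAD bA; case/orP: (splitC A EA) => [sCA | dCA].
  - have -> : f A = A :\: C by rewrite /f (eqP (_ : C :\: A == set0)) ?setD_eq0 ?setU0.
    apply/andP; split; first by apply/eulerianP; split;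
      [exact: subset_trans (subsetDl A C) sAD | exact: balanced_setD].
    by rewrite -(cardsID C A) (setIidPr sCA) oddD oC addTb negbK.
  - have dAC : [disjoint A & C] by rewrite disjoint_sym.
    have -> : f A = A :|: C by rewrite /f (setDidPl dAC) (setDidPl dCA).
    apply/andP; split; first by apply/eulerianP; split;
      [rewrite subUset sAD | exact: balanced_setU].
    by rewrite card_setU_disjoint // oddD oC addbT.
have f_parity A : (eulerian D (f A) && odd #|f A|) = (eulerian D A && ~~ odd #|A|).
  have [EA | nEA] := boolP (eulerian D A).
    by case/andP: (f_eulerian A EA) => -> /eqP ->.
  apply/negbTE; apply: contra nEA => /andP[EfA _].
  by case/andP: (f_eulerian _ EfA); rewrite fK.
rewrite /even_eulerian /odd_eulerian -[RHS](card_preimset _ (can_inj fK)).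
by apply: eq_card => A; rewrite !inE f_parity.
Qed.

Lemma eulerian0 D : eulerian D set0.
Proof.
by apply/eulerianP; split=> [|v]; rewrite ?sub0set // /indeg /outdeg !setIdE !set0I.
Qed.

Lemma potential_eulerian_eq0 D (phi : W -> nat) :
  {in D, forall a, phi a.1 < phi a.2} -> forall A, eulerian D A -> A = set0.
Proof.
move=> phiD A /eulerianP[sAD bA]; apply/eqP/set0Pn => -[a0 Aa0].
(* an arc of A with maximal head would need an out-arc of A going higher *)
have [a Aa a_max] := @arg_maxnP _ a0 (fun a => a \in A) (fun a => phi a.2) Aa0.
have : 0 < outdeg A a.2 by rewrite -bA; apply/card_gt0P; exists a; rewrite inE Aa eqxx.
case/card_gt0P => b; rewrite inE => /andP[Ab /eqP ba].
have := leq_trans (phiD b (subsetP sAD b Ab)) (a_max b Ab).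
by rewrite ba ltnn.
Qed.

Lemma potential_AT_orientation (adj : rel W) D (phi : W -> nat) :
  {in D, forall a, phi a.1 < phi a.2} -> is_orientation adj D -> AT_orientation adj D.
Proof.
move=> phiD oD; rewrite /AT_orientation oD /even_eulerian /odd_eulerian.
have eulE A : eulerian D A = (A == set0).
  apply/idP/eqP => [|->]; last exact: eulerian0.
  exact: (@potential_eulerian_eq0 D phi phiD A).
have -> : [set A | eulerian D A && ~~ odd #|A|] = [set set0].
  by apply/setP => A; rewrite !inE eulE; case: eqP => // ->; rewrite cards0.
have -> : [set A | eulerian D A && odd #|A|] = set0.
  by apply/setP => A; rewrite !inE eulE; case: eqP => // ->; rewrite cards0.
by rewrite cards1 cards0.
Qed.

Definition orient_by (adj : rel W) (phi : W -> nat) : {set W * W} :=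
  [set a | adj a.1 a.2 && (phi a.1 < phi a.2)].

Lemma orient_by_AT (adj : rel W) (phi : W -> nat) : symmetric adj ->
  (forall x y, adj x y -> phi x != phi y) -> AT_orientation adj (orient_by adj phi).
Proof.
move=> adjC phi_neq; apply: (@potential_AT_orientation _ _ phi).
  by move=> a; rewrite inE => /andP[].
apply/andP; split; apply/forallP => x; apply/forallP => y; apply/implyP.
  by rewrite inE => /andP[].
move=> xy; rewrite !inE /= xy adjC xy /=.
by case: ltngtP (phi_neq x y xy) => // ->; rewrite eqxx.
Qed.

Lemma outdeg_le2 D w y1 y2 :
  (forall y, (w, y) \in D -> (y == y1) || (y == y2)) -> outdeg D w <= 2.
Proof.
move=> outD; apply: leq_trans (_ : _ <= #|[set (w, y1); (w, y2)]|) _; last first.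
  by rewrite cards2 ltnS leq_b1.
apply/subset_leq_card/subsetP => -[u y]; rewrite !inE /= => /andP[uyD /eqP uw].
by subst u; case/orP: (outD y uyD) => /eqP ->; rewrite eqxx ?orbT.
Qed.

Lemma outdeg_le1_eq D w y z :
  outdeg D w <= 1 -> (w, y) \in D -> (w, z) \in D -> y = z.
Proof.
move/card_le1_eqP => D1 wy wz.
by have := D1 (w, y) (w, z); rewrite !inE wy wz eqxx => /(_ isT isT) [->].
Qed.

Lemma orientation_arcE (adj : rel W) D x y : is_orientation adj D -> adj x y ->
  ((x, y) \in D) = ((y, x) \notin D).
Proof.
case/andP=> _ /forallP/(_ x)/forallP/(_ y)/implyP oD /oD.
by case: ((x, y) \in D); case: ((y, x) \in D).
Qed.
End Eulerian.

Lemma fconnect_ind (T : finType) (t : T -> T) (P : pred T) :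
  (forall k, P k -> P (t k)) -> forall j i, fconnect t j i -> P j -> P i.
Proof. by move=> Pt j i /iter_findex <- Pj; elim: findex => //= k; apply: Pt. Qed.

Lemma directed_cycle_even_eq_odd (W T : finType) (D : {set W * W})
    (x : T -> W) (t : T -> T) :
  injective x -> injective t -> odd #|T| -> (forall j i, fconnect t j i) ->
  (forall i, (x i, x (t i)) \in D) -> (forall w, outdeg D w <= 1) ->
  even_eulerian D = odd_eulerian D.
Proof.
move=> x_inj t_inj oT t_conn cD D1.
pose arc i := (x i, x (t i)).
have arc_inj : injective arc by move=> i j [/x_inj].
apply: (@even_eq_odd_eulerian _ D [set arc i | i : T]).
- by apply/subsetP => _ /imsetP[i _ ->]; apply: cD.
- by rewrite card_imset.
- have sep_arc (P : pred (W * W)) : #|[set a in arc @: T | P a]| = #|[set i | P (arc i)]|.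
    rewrite -(card_imset _ arc_inj); apply: eq_card => a; rewrite !inE.
    apply/andP/imsetP => [[/imsetP[i _ ->] Pa] | [i]]; first by exists i; rewrite ?inE.
    by rewrite inE => Pi ->; rewrite imset_f.
  move=> v; rewrite /indeg /outdeg !sep_arc -[RHS](card_preimset _ t_inj).
  by apply: eq_card => i; rewrite !inE.
move=> A /eulerianP[sAD bA].
have arcS i : arc i \in A -> arc (t i) \in A.
  move=> Ai; have : 0 < outdeg A (x (t i)).
    by rewrite -bA; apply/card_gt0P; exists (arc i); rewrite inE Ai eqxx.
  case/card_gt0P => -[y z]; rewrite inE /= => /andP[Ayz /eqP yE]; subst y.
  by rewrite /arc -(outdeg_le1_eq (D1 _) (subsetP sAD _ Ayz) (cD (t i))).
have [j Aj | noA] := pickP (fun i => arc i \in A).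
  apply/orP; left; apply/subsetP => _ /imsetP[i _ ->].
  exact: fconnect_ind arcS j i (t_conn j i) Aj.
apply/orP; right; rewrite disjoint_sym; apply/pred0P => a /=.
by apply/negbTE/andP => -[Aa /imsetP[i _ ai]]; move: (noA i); rewrite -ai Aa.
Qed.

Section CyclicSuccessor.
Variable m : nat.
Implicit Types i j k : 'I_m.

Lemma iter_ordS (n : nat) j : val (iter n (@ordS m) j) = (j + n) %% m.
Proof.
elim: n => [|n IHn] /=; first by rewrite addn0 modn_small.
by rewrite IHn -addn1 modnDml addn1 addnS.
Qed.

Lemma fconnect_ordS j i : fconnect (@ordS m) j i.
Proof.
have -> : i = iter (i + m - j) (@ordS m) j.
  apply/val_inj; rewrite iter_ordS subnKC ?modnDr ?modn_small //.
  by rewrite ltnW ?ltn_addl.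
exact: fconnect_iter.
Qed.

Lemma fconnect_ord_pred j i : fconnect (@ord_pred m) j i.
Proof.
rewrite -(eq_fconnect (finv_eq_can (@ordSK m))) same_fconnect_finv.
  exact: fconnect_ordS.
exact: ordS_inj.
Qed.

Lemma ordSS_neq k : 2 < m -> ordS (ordS k) != k.
Proof.
move=> m2; apply/eqP => /(congr1 val) /=.
rewrite -addn1 modnDml addn1; have km := ltn_ord k.
have [lt|ge] := ltnP k.+2 m; first by rewrite modn_small //; lia.
by rewrite -(subnK ge) modnDr modn_small; lia.
Qed.
End CyclicSuccessor.

Lemma odd_cycle_even_eq_odd (W : finType) (adj : rel W) (m : nat) (x : 'I_m -> W)
    (D : {set W * W}) :
  injective x -> odd m -> 2 < m -> (forall i, adj (x i) (x (ordS i))) ->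
  is_orientation adj D -> (forall w, outdeg D w <= 1) ->
  even_eulerian D = odd_eulerian D.
Proof.
move=> x_inj m_odd m2 x_cycle oD D1.
have oI : odd #|'I_m| by rewrite card_ord.
pose backward i := (x (ordS i), x i) \in D.
(* a backward arc followed by a forward one would give [x (ordS i)] outdegree 2 *)
have backwardS i : backward i -> backward (ordS i).
  move=> bi; apply: contraT => nbSi.
  have fSi : (x (ordS i), x (ordS (ordS i))) \in D by rewrite (orientation_arcE oD).
  have /x_inj/eqP := outdeg_le1_eq (D1 _) bi fSi.
  by rewrite eq_sym (negbTE (ordSS_neq i m2)).
have [j bj | nb] := pickP backward.
  apply: (@directed_cycle_even_eq_odd _ _ D x (@ord_pred m)) => //.
  - exact: ord_pred_inj.
  - exact: fconnect_ord_pred.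
  move=> i; have := fconnect_ind backwardS (fconnect_ordS j (ord_pred i)) bj.
  by rewrite /backward ord_predK.
apply: (@directed_cycle_even_eq_odd _ _ D x (@ordS m)) => //.
- exact: ordS_inj.
- exact: fconnect_ordS.
by move=> i; rewrite (orientation_arcE oD (x_cycle i)); apply/negbT/nb.
Qed.

Section CycleAdjacency.
Variable n : nat.
Implicit Types i j : 'I_n.

Lemma cycle_adjE i j : cycle_adj i j = (j == ordS i) || (j == ord_pred i).
Proof.
rewrite -[cycle_adj i j]/((j == ordS i) || (i == ordS j)).
by rewrite -[X in X == ordS j](ord_predK i) (can_eq (@ordSK n)) [ord_pred i == _]eq_sym.
Qed.

Lemma cycle_adj_sym : symmetric (@cycle_adj n).
Proof. by move=> i j; rewrite /cycle_adj orbC. Qed.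

Lemma ordS_neq i : 1 < n -> ordS i != i.
Proof.
move=> n1; apply/eqP => /(congr1 val) /=; have ni := ltn_ord i.
have [lt|ge] := ltnP i.+1 n; first by rewrite modn_small //; lia.
have -> : i.+1 = n by lia.
rewrite modnn; lia.
Qed.

Lemma cycle_adj_neq i j : 1 < n -> cycle_adj i j -> i != j.
Proof.
move=> n1; rewrite cycle_adjE => /orP[]/eqP->; first by rewrite eq_sym ordS_neq.
by apply: contraNneq (ordS_neq i n1) => {1}->; rewrite ord_predK.
Qed.
End CycleAdjacency.

Section SubdivisionProduct.
Variables (V : finType) (g : rel V) (n : nat).
Local Notation W := ((V + edges g) * 'I_n)%type.
Local Notation adj := (@sprod_adj V g n).

Lemma sprod_adj_sym : symmetric adj.
Proof.
move=> [[u|e] i] [[w|f] j]; rewrite /sprod_adj /= ?(eq_sym i) ?(eq_sym (inl u)) //.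
by rewrite cycle_adj_sym.
Qed.

Definition height (x : W) : nat := if x.1 is inl _ then (x.2 : nat).+1 else 0.

Lemma height_neq x y : 1 < n -> adj x y -> height x != height y.
Proof.
move: x y => [[u|e] i] [[w|f] j] n1; rewrite /sprod_adj /height /= ?andbF ?orbF //.
by case/andP => _ /(cycle_adj_neq n1).
Qed.

Lemma outdeg_orient_by_height x : outdeg (orient_by adj height) x <= 2.
Proof.
case: x => [[v|e] i].
- apply: (@outdeg_le2 _ _ _ (inl v, ordS i) (inl v, ord_pred i)) => -[[w|f] j].
    rewrite inE /sprod_adj /height /= andbF orbF => /andP[/andP[/eqP<- ij] _].
    by rewrite !xpair_eqE eqxx /= -cycle_adjE.
  by rewrite inE /height /= ltn0 andbF.
- have /existsP[u /existsP[w /andP[_ /eqP eE]]] := valP e.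
  apply: (@outdeg_le2 _ _ _ (inl u, i) (inl w, i)) => -[[z|f] j];
    rewrite inE /sprod_adj /height /= ?andbF // eE !inE andbT.
  by case/andP => /eqP<- uzw; rewrite !xpair_eqE eqxx !andbT.
Qed.
End SubdivisionProduct.

Theorem corollary3p2 (V : finType) (g : rel V)
  (gsym : symmetric g) (girr : irreflexive g) (Vne : 0 < #|V|)
  (n : nat) (nodd : odd n) (n3 : 3 <= n) :
  AT_eq (@sprod_adj V g n) 3.
Proof.
have n1 : 1 < n by apply: ltnW.
split.
  exists (orient_by (@sprod_adj V g n) (@height V g n)).
  rewrite orient_by_AT /=.
  - by apply/forallP => x; rewrite ltnS outdeg_orient_by_height.
  - exact: sprod_adj_sym.
  - by move=> x y; apply: height_neq.
move=> k k3 [D /andP[/andP[oD /negP AT_D] /forallP outD]].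
have [v0 _] := card_gt0P Vne.
apply/AT_D/eqP.
apply: (@odd_cycle_even_eq_odd _ (@sprod_adj V g n) n (fun i => (inl v0, i))) => //.
- by move=> i j [].
- by move=> i; rewrite /sprod_adj /= eqxx cycle_adjE eqxx.
- by move=> w; have := outD w; lia.
Qed.
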